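(* For all integers $n\ge 0$ and $m\ge 1$, \[ -\frac{2E_{n+m+1}}{\binom{n+m}{n}(n+m+1)}=\sum_{l=0}^{n}\sum_{k=0}^{m}\binom{n}{l}\binom{m}{k}E_{l}E_{k}\,\frac{\Gamma(n-l+1)\Gamma(m-k+1)}{\Gamma(n+m-l-k+2)}, \] and equivalently \[ E_{n+m+1}=-\frac{1}{2}\sum_{l=0}^{n}\sum_{k=0}^{m}\frac{\binom{n}{l}\binom{m}{k}\binom{n+m}{n}}{\binom{n+m-l-k}{n-l}}\cdot\frac{(n+m+1)E_{l}E_{k}}{n+m-l-k+1}. \]
   Context: The Euler numbers $E_n$ are defined by $\frac{2}{e^t+1}=\sum_{n\ge 0}E_n\frac{t^n}{n!}$ (so $E_n=E_n(0)$, where the Euler polynomials are given by $\frac{2}{e^t+1}e^{xt}=\sum_{n\ge0}E_n(x)\frac{t^n}{n!}$). $\Gamma$ is the Euler gamma function. *)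

From HB Require Import structures.
From mathcomp Require Import all_boot all_order all_algebra.
Set Implicit Arguments. Unset Strict Implicit. Unset Printing Implicit Defensive.
Import Order.TTheory GRing.Theory Num.Theory.
Local Open Scope ring_scope.

(* The Euler numbers E_n defined by 2/(e^t+1) = sum_n E_n t^n/n!.
   Multiplying by e^t + 1 and comparing coefficients of t^n/n! in the formal
   power series identity (e^t + 1) * sum_n E_n t^n/n! = 2 gives
     sum_{k=0}^{n} C(n,k) E_k + E_n = 2 [n = 0],
   i.e. E_0 = 1 and E_n = -1/2 * sum_{k<n} C(n,k) E_k for n >= 1.
   euler_seq n lists E_0, ..., E_n. *)
Fixpoint euler_seq (n : nat) : seq rat :=
  match n with
  | 0 => [:: 1]
  | n'.+1 =>
      let s := euler_seq n' in
      rcons s (- (1 / 2) * \sum_(k < n'.+1) ('C(n'.+1, k))%:R * nth 0 s k)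
  end.

Definition EulerE (n : nat) : rat := nth 0 (euler_seq n) n.

(* Gamma at positive integers: Gamma(j+1) = j!. *)
Definition GammaNat (j : nat) : rat := (j.-1)`!%:R.

From mathcomp Require Import all_boot all_order all_algebra.
From mathcomp Require Import ring zify.
Set Implicit Arguments. Unset Strict Implicit. Unset Printing Implicit Defensive.
Import Order.TTheory GRing.Theory Num.Theory.
Local Open Scope ring_scope.

(* Let E_n(x) = sum_l C(n,l) E_l x^(n-l) be the Euler
   polynomials and I(n,m) = int_0^1 E_n(x) E_m(1-x) dx.  Since
   E_(n+1)' = (n+1) E_n, E_(n+1)(0) = E_(n+1) and E_(n+1)(1) = -E_(n+1),
   the boundary terms of an integration by parts cancel, giving
   (n+1) I(n,m+1) = (m+1) I(n+1,m); iterating, I(n,m) = n! m!/(n+m)! I(n+m,0),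
   and I(N,0) = -2 E_(N+1)/(N+1) by the fundamental theorem of calculus.
   Hence I(n,m) = -2 E_(n+m+1) / (C(n+m,n) (n+m+1)).  Expanding the product
   instead and integrating monomials with the Beta integral
   int_0^1 x^a (1-x)^b dx = a! b! / (a+b+1)! yields the double sum.

   The integral over [0,1] is the linear functional on polynomials sending
   X^i to 1/(i+1); everything is exact algebra over the rationals. *)

Lemma natr_fact_neq0 (F : numDomainType) k : (k`!)%:R != 0 :> F.
Proof. by rewrite pnatr_eq0 -lt0n fact_gt0. Qed.

Lemma natr_bin_add_neq0 (F : numDomainType) a b : ('C(a + b, a))%:R != 0 :> F.
Proof. by rewrite pnatr_eq0 -lt0n bin_gt0 leq_addr. Qed.

Section IntegralUnitInterval.
Variable F : numFieldType.

Definition int01 (p : {poly F}) : F := \sum_(i < size p) p`_i / i.+1%:R.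

Lemma int01E n (p : {poly F}) :
  (size p <= n)%N -> int01 p = \sum_(i < n) p`_i / i.+1%:R.
Proof.
move=> hn; rewrite /int01 (big_ord_widen _ (fun i => p`_i / i.+1%:R) hn).
rewrite [RHS](bigID (fun i : 'I_n => (i < size p)%N)) /=.
rewrite [X in _ = _ + X]big1 ?addr0 // => i /negbTE hi.
by rewrite nth_default ?mul0r // leqNgt hi.
Qed.
Arguments int01E {n p}.

Lemma int01D p q : int01 (p + q) = int01 p + int01 q.
Proof.
set n := maxn (size p) (size q).
rewrite (@int01E n p) ?leq_maxl // (@int01E n q) ?leq_maxr //.
rewrite (@int01E n (p + q)) ?size_polyD // -big_split /=.
by apply: eq_bigr => i _; rewrite coefD mulrDl.
Qed.

Lemma int01Z a p : int01 (a *: p) = a * int01 p.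
Proof.
rewrite (int01E (size_scale_leq a p)) /int01 mulr_sumr.
by apply: eq_bigr => i _; rewrite coefZ mulrA.
Qed.

Lemma int01N p : int01 (- p) = - int01 p.
Proof. by rewrite -scaleN1r int01Z mulN1r. Qed.

Lemma int01_sum (I : Type) (r : seq I) (P : I -> {poly F}) :
  int01 (\sum_(i <- r) P i) = \sum_(i <- r) int01 (P i).
Proof.
elim: r => [|x r IH]; first by rewrite !big_nil /int01 size_poly0 big_ord0.
by rewrite !big_cons int01D IH.
Qed.

Lemma int01_deriv p : int01 p^`() = p.[1] - p.[0].
Proof.
have hsize : (size p^`() <= size p)%N.
  have [->|nz] := eqVneq p 0; first by rewrite deriv0 size_poly0.
  exact: ltnW (lt_size_deriv nz).
rewrite (int01E hsize) (horner_coef_wide 1 (leqnSn (size p))).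
rewrite big_ord_recl horner_coef0 expr0 mulr1 addrC addKr.
apply: eq_bigr => i _; rewrite coef_deriv expr1n mulr1.
by rewrite -[p`_i.+1 *+ _]mulr_natr mulfK // pnatr_eq0.
Qed.

Lemma int01_parts p q :
  int01 (p^`() * q) = ((p * q).[1] - (p * q).[0]) - int01 (p * q^`()).
Proof. by rewrite -int01_deriv derivM int01D addrK. Qed.

Lemma int01_Xn a : int01 'X^a = a.+1%:R^-1.
Proof.
rewrite /int01 size_polyXn big_ord_recr /= big1 ?add0r => [|i _].
  by rewrite coefXn eqxx mul1r.
by rewrite coefXn (ltn_eqF (ltn_ord i)) mul0r.
Qed.

(* The Beta integral B(a+1,b+1), by induction on b: integrating by parts
   moves one factor (1 - X) onto X^a. *)
Lemma int01_beta a b :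
  int01 ('X^a * (1 - 'X) ^+ b) = (a`! * b`!)%:R / ((a + b).+1`!)%:R.
Proof.
elim: b a => [|b IH] a.
  rewrite expr0 mulr1 int01_Xn addn0 muln1 factS natrM.
  have := natr_fact_neq0 F a.
  by move=> ha; field; rewrite ha addrC natr1 pnatr_eq0.
have dXn : deriv 'X^(a.+1) * (1 - 'X) ^+ b.+1
           = a.+1%:R *: ('X^a * (1 - 'X) ^+ b.+1) :> {poly F}.
  by rewrite derivXn -mul_polyC polyC_natr; ring.
have dY : 'X^(a.+1) * deriv ((1 - 'X) ^+ b.+1)
          = (- b.+1%:R) *: ('X^(a.+1) * (1 - 'X) ^+ b) :> {poly F}.
  rewrite deriv_exp derivB derivX -polyC1 derivC -mul_polyC polyCN.
  by rewrite polyC_natr /= polyC1; ring.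
have hbd : ('X^(a.+1) * (1 - 'X) ^+ b.+1).[1]
            - ('X^(a.+1) * (1 - 'X) ^+ b.+1).[0] = 0 :> F.
  by rewrite !hornerE subrr !expr0n /= mulr0 mul0r subrr.
have hparts : a.+1%:R * int01 ('X^a * (1 - 'X) ^+ b.+1)
              = b.+1%:R * int01 ('X^(a.+1) * (1 - 'X) ^+ b).
  have := int01_parts ('X^(a.+1)) ((1 - 'X) ^+ b.+1).
  by rewrite hbd sub0r dXn dY !int01Z mulNr opprK.
apply: (@mulfI _ a.+1%:R); first by rewrite pnatr_eq0.
rewrite hparts IH addSn addnS.
have := natr_fact_neq0 F a; have := natr_fact_neq0 F b.
have := natr_fact_neq0 F (a + b).+2.
move: ((a + b).+2)`! => N hN hb ha.
by rewrite (factS a) (factS b) !natrM; field.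
Qed.

End IntegralUnitInterval.

Lemma beta_binomial a b :
  ((a`! * b`!)%:R / ((a + b).+1`!)%:R)
  = ('C(a + b, a)%:R * (a + b).+1%:R)^-1 :> rat.
Proof.
have := bin_fact (leq_addr b a); rewrite addKn => hfact.
rewrite factS -hfact !natrM.
have := natr_fact_neq0 rat a; have := natr_fact_neq0 rat b.
have := natr_bin_add_neq0 rat a b.
by move=> hC hb ha; field; rewrite hC hb ha -natrD addrC natr1 pnatr_eq0.
Qed.

Lemma size_euler_seq n : size (euler_seq n) = n.+1.
Proof. by elim: n => //= n IH; rewrite size_rcons IH. Qed.

Lemma nth_euler_seq n k : (k <= n)%N -> nth 0 (euler_seq n) k = EulerE k.
Proof.
elim: n k => [|n IH] k; first by rewrite leqn0 => /eqP ->.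
rewrite leq_eqVlt => /orP [/eqP -> //|hk].
by rewrite /= nth_rcons size_euler_seq hk IH.
Qed.

Lemma EulerE_rec n :
  EulerE n.+1 = - (1 / 2) * \sum_(k < n.+1) ('C(n.+1, k))%:R * EulerE k.
Proof.
rewrite /EulerE /= nth_rcons size_euler_seq ltnn eqxx.
congr (_ * _); apply: eq_bigr => k _.
by rewrite nth_euler_seq // -ltnS.
Qed.

(* The same recurrence in the form E_(n+1)(1) = -E_(n+1). *)
Lemma EulerE_binomial_sum n :
  \sum_(k < n.+2) ('C(n.+1, k))%:R * EulerE k = - EulerE n.+1.
Proof.
rewrite big_ord_recr /= binn EulerE_rec mul1r.
by set s := \sum_(_ < _) _; field.
Qed.

Definition euler_poly (n : nat) (y : {poly rat}) : {poly rat} :=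
  \sum_(l < n.+1) (('C(n, l))%:R * EulerE l) *: y ^+ (n - l).

Lemma euler_poly0 y : euler_poly 0 y = 1.
Proof.
by rewrite /euler_poly big_ord_recr big_ord0 /= add0r bin0 /EulerE /= mul1r
  scale1r.
Qed.

Lemma euler_poly_deriv n y :
  (euler_poly n.+1 y)^`() = n.+1%:R *: (y^`() * euler_poly n y).
Proof.
rewrite /euler_poly raddf_sum big_ord_recr /= subnn expr0 derivZ.
rewrite -polyC1 derivC scaler0 addr0 mulr_sumr scaler_sumr.
apply: eq_bigr => l _; have hl : (l <= n)%N by rewrite -ltnS.
rewrite derivZ deriv_exp subSn // -scalerAr -scaler_nat !scalerA.
congr (_ *: _); rewrite mulrAC -natrM mulnC -subSn //.
by rewrite -mul_bin_down natrM; ring.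
Qed.

Lemma euler_poly_horner n y x :
  (euler_poly n y).[x]
  = \sum_(l < n.+1) ('C(n, l))%:R * EulerE l * y.[x] ^+ (n - l).
Proof.
by rewrite horner_sum; apply: eq_bigr => l _; rewrite hornerZ horner_exp.
Qed.

Lemma euler_poly_at0 n y x : y.[x] = 0 -> (euler_poly n y).[x] = EulerE n.
Proof.
move=> hy; rewrite euler_poly_horner hy big_ord_recr /= subnn binn mul1r mulr1.
rewrite big1 ?add0r // => l _.
by rewrite expr0n subn_eq0 leqNgt ltn_ord mulr0.
Qed.

Lemma euler_poly_at1 n y x :
  y.[x] = 1 -> (euler_poly n.+1 y).[x] = - EulerE n.+1.
Proof.
move=> hy; rewrite euler_poly_horner hy -EulerE_binomial_sum.
by apply: eq_bigr => l _; rewrite expr1n mulr1.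
Qed.

Definition euler_int (n m : nat) : rat :=
  int01 (euler_poly n 'X * euler_poly m (1 - 'X)).

Lemma hornerX1 : 'X.[1] = 1 :> rat. Proof. exact: hornerX. Qed.
Lemma hornerX0 : 'X.[0] = 0 :> rat. Proof. exact: hornerX. Qed.
Lemma horner1BX1 : (1 - 'X).[1] = 0 :> rat. Proof. by rewrite !hornerE subrr. Qed.
Lemma horner1BX0 : (1 - 'X).[0] = 1 :> rat. Proof. by rewrite !hornerE. Qed.

(* Integration by parts; the boundary terms E_(n+1)(x) E_(m+1)(1-x) agree
   at x = 0 and x = 1. *)
Lemma euler_int_shift n m :
  n.+1%:R * euler_int n m.+1 = m.+1%:R * euler_int n.+1 m.
Proof.
have hparts := int01_parts (euler_poly n.+1 'X) (euler_poly m.+1 (1 - 'X)).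
rewrite !hornerM (euler_poly_at1 _ hornerX1) (euler_poly_at0 _ horner1BX1)
  (euler_poly_at0 _ hornerX0) (euler_poly_at1 _ horner1BX0) in hparts.
rewrite mulrN mulNr subrr sub0r !euler_poly_deriv derivX derivB derivX in hparts.
rewrite -polyC1 derivC sub0r mul1r -scalerAl -scalerAr !int01Z in hparts.
by rewrite mulN1r mulrN int01N mulrN opprK in hparts; rewrite /euler_int hparts.
Qed.

(* I(N,0) = int_0^1 E_N = (E_(N+1)(1) - E_(N+1)(0))/(N+1). *)
Lemma euler_int_base N : N.+1%:R * euler_int N 0 = - (2 * EulerE N.+1).
Proof.
rewrite /euler_int euler_poly0 mulr1 -int01Z -(mul1r (euler_poly N 'X)).
rewrite -{1}derivX -euler_poly_deriv int01_deriv.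
by rewrite (euler_poly_at1 _ hornerX1) (euler_poly_at0 _ hornerX0); ring.
Qed.

Lemma euler_int_collapse n m :
  euler_int n m = (n`! * m`!)%:R / ((n + m)`!)%:R * euler_int (n + m) 0.
Proof.
elim: m n => [|m IH] n.
  by rewrite addn0 fact0 muln1 mulfV ?natr_fact_neq0 // mul1r.
apply: (@mulfI _ n.+1%:R); first by rewrite pnatr_eq0.
rewrite euler_int_shift IH addSnnS.
have := natr_fact_neq0 rat n; have := natr_fact_neq0 rat m.
have := natr_fact_neq0 rat (n + m.+1).
move: (n + m.+1)`! => N ? ? ?.
by rewrite (factS n) (factS m) !natrM; field.
Qed.

Lemma euler_int_closed n m :
  euler_int n m = - (2 * EulerE (n + m).+1) / ('C(n + m, n)%:R * (n + m).+1%:R).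
Proof.
have hN : (n + m).+1%:R != 0 :> rat by rewrite pnatr_eq0.
have hbase : euler_int (n + m) 0 = - (2 * EulerE (n + m).+1) / (n + m).+1%:R.
  by apply: (mulfI hN); rewrite euler_int_base [RHS]mulrC divfK.
rewrite euler_int_collapse hbase -(beta_binomial n m).
rewrite factS !natrM; have := natr_fact_neq0 rat (n + m).
by move: (n + m).+1%:R hN => s hs hf; field; rewrite hf hs.
Qed.

Lemma euler_int_expand n m :
  euler_int n m = \sum_(l < n.+1) \sum_(k < m.+1)
    ('C(n, l))%:R * ('C(m, k))%:R * EulerE l * EulerE k
    * (((n - l)`! * (m - k)`!)%:R / ((n - l + (m - k)).+1`!)%:R).
Proof.
rewrite /euler_int /euler_poly mulr_suml int01_sum; apply: eq_bigr => l _.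
rewrite mulr_sumr int01_sum; apply: eq_bigr => k _.
rewrite -scalerAl -scalerAr !int01Z int01_beta.
by rewrite !mulrA (mulrAC _ (EulerE l)).
Qed.

Lemma gamma_quotient n m l k : (l <= n)%N -> (k <= m)%N ->
  GammaNat (n - l + 1) * GammaNat (m - k + 1) / GammaNat (n + m - l - k + 2)
  = ((n - l)`! * (m - k)`!)%:R / ((n - l + (m - k)).+1`!)%:R.
Proof.
move=> hl hk; have -> : (n + m - l - k + 2 = (n - l + (m - k)).+2)%N by lia.
by rewrite /GammaNat !addn1 !succnK natrM.
Qed.

Lemma second_form_term n m l k (a b : rat) : (l <= n)%N -> (k <= m)%N ->
  ('C(n, l))%:R * ('C(m, k))%:R * ('C(n + m, n))%:R
    / ('C(n + m - l - k, n - l))%:R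
  * ((n + m).+1%:R * a * b / (n + m - l - k + 1)%:R)
  = ('C(n + m, n)%:R * (n + m).+1%:R)
    * (('C(n, l))%:R * ('C(m, k))%:R * a * b
       * (((n - l)`! * (m - k)`!)%:R / ((n - l + (m - k)).+1`!)%:R)).
Proof.
move=> hl hk; rewrite beta_binomial addn1.
rewrite (_ : (n + m - l - k = n - l + (m - k))%N); last by lia.
have hs : (n - l + (m - k)).+1%:R != 0 :> rat by rewrite pnatr_eq0.
have := natr_bin_add_neq0 rat (n - l) (m - k).
by move: (n - l + (m - k)).+1%:R hs => s hs hC; field; rewrite hs hC.
Qed.

(* Both identities follow from the two evaluations of I(n,m); the argument
   does not need the hypothesis 1 <= m. *)
Theorem theorem4 (n m : nat) (hm : (1 <= m)%N) :
  (- (2 * EulerE (n + m + 1)) / (('C(n + m, n))%:R * (n + m + 1)%:R)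
   = \sum_(l < n.+1) \sum_(k < m.+1)
       ('C(n, l))%:R * ('C(m, k))%:R * EulerE l * EulerE k
       * (GammaNat (n - l + 1) * GammaNat (m - k + 1)
          / GammaNat (n + m - l - k + 2)))
  /\
  EulerE (n + m + 1)
   = - (1 / 2) * \sum_(l < n.+1) \sum_(k < m.+1)
       (('C(n, l))%:R * ('C(m, k))%:R * ('C(n + m, n))%:R
          / ('C(n + m - l - k, n - l))%:R)
       * ((n + m + 1)%:R * EulerE l * EulerE k / (n + m - l - k + 1)%:R).
Proof.
set c := 'C(n + m, n)%:R * (n + m).+1%:R : rat.
have hc : c != 0 by rewrite mulf_neq0 ?natr_bin_add_neq0 ?pnatr_eq0.
have hI := euler_int_closed n m; rewrite euler_int_expand -/c in hI.
rewrite addn1; split.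
  rewrite -hI; apply: eq_bigr => l _; apply: eq_bigr => k _.
  by rewrite gamma_quotient // -ltnS.
have hsum : \sum_(l < n.+1) \sum_(k < m.+1)
    ('C(n, l))%:R * ('C(m, k))%:R * ('C(n + m, n))%:R
      / ('C(n + m - l - k, n - l))%:R
    * ((n + m).+1%:R * EulerE l * EulerE k / (n + m - l - k + 1)%:R)
  = c * (- (2 * EulerE (n + m).+1) / c).
  rewrite -hI mulr_sumr; apply: eq_bigr => l _; rewrite mulr_sumr.
  by apply: eq_bigr => k _; rewrite second_form_term // -ltnS.
by rewrite hsum [c * _]mulrC divfK // mulrN mulNr opprK mulrA div1r mulVf ?mul1r.
Qed.
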